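(* (a) For every integer $n\ge 5$ and every $\epsilon>0$ there exists a convex $n$-gon $K$ such that $\Delta(K_1)/\Delta(K)<\epsilon$. (b) For every integer $n\ge 6$ and every $\epsilon>0$ there exists a convex $n$-gon $K$ such that $\Delta(K_1)/\Delta(K)>1-\epsilon$.
   Context: For a convex polygon $K=A_1A_2\ldots A_n$ ($n\ge 5$, vertices listed counterclockwise, indices taken modulo $n$), $K_1=B_1B_2\ldots B_n$ denotes the convex $n$-gon bounded by the short diagonals $A_1A_3, A_2A_4,\ldots,A_{n-1}A_1,A_nA_2$, where $B_i$ is the intersection point of the diagonals $A_{i-1}A_{i+1}$ and $A_iA_{i+2}$. $\Delta(\cdot)$ denotes area. *)

From mathcomp Require Import all_boot all_order all_algebra.
From mathcomp Require Import reals.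
Set Implicit Arguments. Unset Strict Implicit. Unset Printing Implicit Defensive.
Import Order.TTheory GRing.Theory Num.Theory.
Local Open Scope ring_scope.

Section Defs.
Variable R : realType.
Definition point := (R * R)%type.

(* cross o a b > 0 iff (o, a, b) is a counterclockwise (left) turn *)
Definition cross (o a b : point) : R :=
  (a.1 - o.1) * (b.2 - o.2) - (a.2 - o.2) * (b.1 - o.1).

Definition vtx (n : nat) (P : nat -> point) (i : nat) : point := P (i %% n)%N.

(* P 0, ..., P (n-1) are the vertices, listed counterclockwise, of a convex
   n-gon: every vertex other than the endpoints of an edge lies strictly to
   the left of that (directed) edge. *)
Definition convex_ngon (n : nat) (P : nat -> point) : Prop :=
  (3 <= n)%N /\
  forall i j : nat, (i < n)%N -> (j < n)%N -> j != i -> j != (i.+1 %% n)%N ->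
    0 < cross (P i) (P (i.+1 %% n)%N) (P j).

Definition area (n : nat) (Q : nat -> point) : R :=
  `| (\sum_(i < n) ((Q i).1 * (Q (i.+1 %% n)%N).2 - (Q (i.+1 %% n)%N).1 * (Q i).2)) / 2 |.

(* intersection point of the lines p1p2 and p3p4 (when not parallel) *)
Definition line_inter (p1 p2 p3 p4 : point) : point :=
  let d := (p2.1 - p1.1) * (p4.2 - p3.2) - (p2.2 - p1.2) * (p4.1 - p3.1) in
  let t := ((p3.1 - p1.1) * (p4.2 - p3.2) - (p3.2 - p1.2) * (p4.1 - p3.1)) / d in
  (p1.1 + t * (p2.1 - p1.1), p1.2 + t * (p2.2 - p1.2)).

(* B_i = intersection of the diagonals A_{i-1}A_{i+1} and A_i A_{i+2} *)
Definition Bpt (n : nat) (P : nat -> point) (i : nat) : point :=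
  line_inter (vtx n P (i + n - 1)%N) (vtx n P i.+1) (vtx n P i) (vtx n P i.+2).

(* K_1 = B_0 B_1 ... B_{n-1} (same cyclic polygon as B_1 ... B_n) *)
Definition K1 (n : nat) (P : nat -> point) : nat -> point := Bpt n P.
End Defs.

(* Put the vertices on the parabola y = x^2: there every cross product factors as
   (b - a) (c - a) (c - b), and each B_i is an explicit point of abscissa between those
   of the endpoints of both diagonals through it.  Taking the abscissae in three
   clusters near -1, 0 and 1 makes K almost the triangle (-1,1), (0,0), (1,1).
   (a) With single vertices near -1 and near 0 and all others near 1, each B_i lies on a
   short diagonal joining two vertices close to the line y = x, so K_1 is a thin sliver.
   (b) With two vertices near -1, two near 0 and the others near 1 (so n >= 6), every
   ear A_i A_(i+1) A_(i+2) contains two vertices at distance t, so it has area O(t);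
   since K \ K_1 is covered by two triangles inside each ear, the area lost is O(n t). *)

From mathcomp Require Import all_boot all_order all_algebra.
From mathcomp Require Import reals.
From mathcomp.algebra_tactics Require Import ring lra.
From mathcomp Require Import zify.
Set Implicit Arguments. Unset Strict Implicit. Unset Printing Implicit Defensive.
Import Order.TTheory GRing.Theory Num.Theory.
Local Open Scope ring_scope.

Section ShortDiagonals.
Variable R : realType.
Implicit Types (n : nat) (P : nat -> point R) (x : nat -> R).

Lemma vtx_addn n P i : vtx n P (i + n) = vtx n P i.
Proof. by rewrite /vtx modnDr. Qed.

Lemma vtx_K1 n P i : (0 < n)%N -> vtx n (K1 n P) i = Bpt n P i.
Proof.
move=> n_gt0; change (Bpt n P (i %% n) = Bpt n P i).
have vtx_modDl k : vtx n P (i %% n + k) = vtx n P (i + k) by rewrite /vtx modnDml.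
have vtx_mod : vtx n P (i %% n) = vtx n P i by rewrite /vtx modn_mod.
rewrite /Bpt -!addnBA // -(addn2 (i %% n)) -(addn1 (i %% n)) !vtx_modDl vtx_mod.
by rewrite addn1 addn2.
Qed.

Definition wedge (p q : point R) : R := p.1 * q.2 - q.1 * p.2.

Definition shoelace n (Q : nat -> point R) : R := \sum_(i < n) wedge (Q i) (Q i.+1).

Lemma area_shoelace n P : area n P = `|shoelace n (vtx n P)| / 2.
Proof.
rewrite /area normrM normfV (ger0_norm (ler0n _ 2)); congr (`|_| / 2).
by apply: eq_bigr => i _; rewrite /wedge /vtx (modn_small (ltn_ord i)).
Qed.

Lemma area_ratio n P : area n (K1 n P) / area n P =
  `|shoelace n (vtx n (K1 n P))| / `|shoelace n (vtx n P)|.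
Proof. by rewrite !area_shoelace invfM invrK mulrACA mulVf ?mulr1 ?pnatr_eq0. Qed.

Lemma sum_periodic_shift n k (g : nat -> R) : (forall i, g (i + n)%N = g i) ->
  \sum_(i < n) g (i + k)%N = \sum_(i < n) g i.
Proof.
move=> g_per; elim: k => [|k IHk]; first by under eq_bigr do rewrite addn0.
rewrite -IHk; case: n g_per {IHk} => [|n] g_per; first by rewrite !big_ord0.
rewrite big_ord_recr big_ord_recl /= -addSnnS addnC g_per add0n addrC.
by congr (_ + _); apply: eq_bigr => i _; rewrite addSnnS.
Qed.

Lemma shoelace_sub n (A B : nat -> point R) :
  (forall i, A (i + n)%N = A i) -> (forall i, B (i + n)%N = B i) ->
  shoelace n A - shoelace n B =
  \sum_(i < n) (cross (A i.+2) (A i.+3) (B i.+2) + cross (B i.+2) (B i.+1) (A i.+2)).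
Proof.
move=> A_per B_per.
have split_cross i : cross (A i.+2) (A i.+3) (B i.+2) + cross (B i.+2) (B i.+1) (A i.+2) =
    wedge (A (i + 2)%N) (A (i + 2).+1) - wedge (B (i + 1)%N) (B (i + 1).+1)
    + (wedge (A i.+3) (B i.+2) - wedge (A i.+2) (B i.+1)).
  by rewrite addn1 addn2 /cross /wedge; ring.
under eq_bigr do rewrite split_cross.
rewrite big_split sumrB /= (@sum_periodic_shift n 2 (fun i => wedge (A i) (A i.+1))); last first.
  by move=> i; rewrite -addSn !A_per.
rewrite (@sum_periodic_shift n 1 (fun i => wedge (B i) (B i.+1))); last first.
  by move=> i; rewrite -addSn !B_per.
rewrite -(big_mkord xpredT (fun i => wedge (A i.+3) (B i.+2) - wedge (A i.+2) (B i.+1))).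
rewrite (telescope_sumr (fun i => wedge (A i.+2) (B i.+1))) //.
by rewrite -[n.+2]addn2 -[n.+1]addn1 !(addnC n) A_per B_per subrr addr0.
Qed.

Definition parabola_pt (a : R) : point R := (a, a ^+ 2).

Definition parabola_poly x : nat -> point R := fun j => parabola_pt (x j).

Definition chord (a c s : R) : point R := (s, (a + c) * s - a * c).

Definition between (s a c : R) := (s - a) * (s - c) <= 0.

Lemma cross_parabola a b c :
  cross (parabola_pt a) (parabola_pt b) (parabola_pt c) = (b - a) * (c - a) * (c - b).
Proof. by rewrite /cross /=; ring. Qed.

Lemma convex_parabola n x : (3 <= n)%N ->
  (forall i j, (i < j < n)%N -> x i < x j) -> convex_ngon n (parabola_poly x).
Proof.
move=> n_ge3 x_lt; split=> // i j i_lt j_lt j_neq_i j_neq_Si.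
rewrite cross_parabola.
have [Si_lt|Si_ge] := ltnP i.+1 n.
  rewrite modn_small // in j_neq_Si *.
  have x_i_lt_Si := x_lt i i.+1 ltac:(lia).
  have [j_lt_i|Si_lt_j] : (j < i)%N \/ (i.+1 < j)%N by lia.
    have x_j_lt := x_lt j i ltac:(lia).
    by rewrite -mulrA mulr_gt0 ?subr_gt0 //; nra.
  have x_Si_lt := x_lt i.+1 j ltac:(lia).
  by rewrite !mulr_gt0 // subr_gt0 //; lra.
have Si_n : i.+1 = n by lia.
rewrite Si_n modnn in j_neq_Si *.
have x_0_lt := x_lt 0 j ltac:(lia); have x_j_lt := x_lt j i ltac:(lia).
by rewrite mulr_gt0 //; nra.
Qed.

Lemma convex_cross_vtx n P m d : convex_ngon n P -> (2 <= d < n)%N ->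
  0 < cross (vtx n P m) (vtx n P m.+1) (vtx n P (m + d)).
Proof.
move=> [n_ge3 P_convex] /andP[d_ge2 d_lt].
have m_lt : (m %% n < n)%N by rewrite ltn_pmod //; lia.
have md_lt : ((m + d) %% n < n)%N by rewrite ltn_pmod //; lia.
have md_neq : ((m + d) %% n != m %% n)%N.
  by rewrite -[in X in _ != X](addn0 m) eqn_modDl mod0n modn_small //; lia.
have md_neqS : ((m + d) %% n != (m %% n).+1 %% n)%N.
  by rewrite -addn1 modnDml eqn_modDl !modn_small //; lia.
by have := P_convex _ _ m_lt md_lt md_neq md_neqS; rewrite /vtx -addn1 modnDml addn1.
Qed.

(* The sign condition says that a and c separate b and d, i.e. the chords cross. *)
Lemma line_inter_parabola a b c d : (b - a) * (c - b) * (d - c) * (a - d) < 0 ->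
  exists s, [/\ line_inter (parabola_pt a) (parabola_pt c) (parabola_pt b) (parabola_pt d)
                 = chord a c s, chord a c s = chord b d s,
              between s a c & between s b d].
Proof.
set Q := _ * (a - d) => Q_lt0.
have Q_neq_sqr (r : R) : Q <> r ^+ 2 by move=> Q_sqr; move: Q_lt0; rewrite Q_sqr ltNge sqr_ge0.
have ca_neq0 : c - a != 0.
  apply/eqP => ca0; apply: (Q_neq_sqr ((b - a) * (d - a))).
  rewrite /Q; suff -> : c = a by ring.
  lra.
have db_neq0 : d - b != 0.
  apply/eqP => db0; apply: (Q_neq_sqr ((b - a) * (c - b))).
  rewrite /Q; suff -> : d = b by ring.
  lra.
set D := b + d - a - c.
have D_neq0 : D != 0.
  apply/eqP => D0; apply: (Q_neq_sqr ((b - a) * (c - b))).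
  rewrite /Q; suff -> : d = a + c - b by ring.
  rewrite /D in D0; lra.
set s := (b * d - a * c) / D.
have s_on_chords : chord a c s = chord b d s by rewrite /chord /s /D; congr pair; field.
exists s; split.
- have den : (c - a) * (d ^+ 2 - b ^+ 2) - (c ^+ 2 - a ^+ 2) * (d - b) = (c - a) * (d - b) * D.
    by rewrite /D; ring.
  rewrite /line_inter /chord /= den; congr pair; rewrite /s /D; field;
    by rewrite -/D ?D_neq0 ?mulf_neq0 ?db_neq0 ?ca_neq0.
- exact: s_on_chords.
- suff : (s - a) * (s - c) * D ^+ 2 = Q by rewrite /between; nra.
  by rewrite /s /Q /D; field.
- suff : (s - b) * (s - d) * D ^+ 2 = Q by rewrite /between; nra.
  by rewrite /s /Q /D; field.
Qed.

Lemma Bpt_parabola n x m (a := x (m %% n)%N) (b := x (m.+1 %% n)%N)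
    (c := x (m.+2 %% n)%N) (d := x (m.+3 %% n)%N) :
  (4 <= n)%N -> convex_ngon n (parabola_poly x) ->
  exists s, [/\ Bpt n (parabola_poly x) m.+1 = chord a c s,
              Bpt n (parabola_poly x) m.+1 = chord b d s,
              between s a c & between s b d].
Proof.
set P := parabola_poly x => n_ge4 convex.
have turn_abc : 0 < cross (vtx n P m) (vtx n P m.+1) (vtx n P m.+2).
  by rewrite -addn2; apply: convex_cross_vtx => //; lia.
have turn_cda : 0 < cross (vtx n P m.+2) (vtx n P m.+3) (vtx n P m).
  rewrite -(@vtx_addn n P m) (_ : m + n = m.+2 + (n - 2))%N; last by lia.
  by apply: convex_cross_vtx => //; lia.
rewrite /vtx /P /parabola_poly !cross_parabola -/a -/b -/c -/d in turn_abc turn_cda.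
have crossing : (b - a) * (c - b) * (d - c) * (a - d) < 0.
  have := mulr_gt0 turn_abc turn_cda.
  have -> : (b - a) * (c - a) * (c - b) * ((d - c) * (a - c) * (a - d)) =
    - ((b - a) * (c - b) * (d - c) * (a - d)) * (c - a) ^+ 2 by ring.
  apply: contraTT; rewrite -!leNgt mulNr oppr_le0 => Q_ge0.
  by rewrite mulr_ge0 ?sqr_ge0.
have [s [inter_ac ac_bd between_ac between_bd]] := line_inter_parabola crossing.
have Bpt_eq : Bpt n P m.+1 = chord a c s.
  by rewrite /Bpt -inter_ac addSn subn1 vtx_addn.
by exists s; split; rewrite // Bpt_eq.
Qed.

Lemma between_norm_le s a c r : between s a c -> `|a| <= r -> `|c| <= r -> `|s| <= r.
Proof.
rewrite /between => s_between /ler_normlP[a_ge a_le] /ler_normlP[c_ge c_le].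
by apply/ler_normlP; split; nra.
Qed.

Lemma between_dist_le s a c : between s a c -> `|s - c| <= `|c - a|.
Proof.
move=> s_between; apply: (@between_norm_le _ (a - c) 0).
- by rewrite /between subr0 (_ : s - c - (a - c) = s - a) //; ring.
- by rewrite distrC.
- by rewrite normr0.
Qed.

Lemma between2_dist_le s s' a c : between s a c -> between s' a c -> `|s - s'| <= `|c - a|.
Proof.
move=> s_between s'_between.
apply: (@between_norm_le _ (a - s') (c - s')).
- by rewrite /between (_ : s - s' - (a - s') = s - a) 1?(_ : s - s' - (c - s') = s - c) //; ring.
- by rewrite distrC (distrC c); apply: between_dist_le; rewrite /between mulrC.
- by rewrite distrC; exact: between_dist_le.
Qed.

Lemma norm_ear_parabola w1 u w2 :
  `|cross (parabola_pt w1) (parabola_pt u) (parabola_pt w2)| = `|w2 - w1| * `|(u - w1) * (u - w2)|.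
Proof.
rewrite cross_parabola -normrM -normrN; congr `|_|; ring.
Qed.

Lemma cross_chord_le_ear w1 u w2 s : between s w1 w2 ->
  `|cross (parabola_pt u) (parabola_pt w2) (chord w1 w2 s)| <=
  `|cross (parabola_pt w1) (parabola_pt u) (parabola_pt w2)|.
Proof.
move=> s_between; rewrite norm_ear_parabola.
have -> : cross (parabola_pt u) (parabola_pt w2) (chord w1 w2 s) =
  (s - w2) * ((u - w1) * (u - w2)) by rewrite /cross /=; ring.
by rewrite normrM ler_wpM2r // between_dist_le.
Qed.

Lemma cross_chord2_le_ear w1 u w2 s s' : between s w1 w2 -> between s' w1 w2 ->
  `|cross (chord w1 w2 s) (chord w1 w2 s') (parabola_pt u)| <=
  `|cross (parabola_pt w1) (parabola_pt u) (parabola_pt w2)|.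
Proof.
move=> s_between s'_between; rewrite norm_ear_parabola.
have -> : cross (chord w1 w2 s) (chord w1 w2 s') (parabola_pt u) =
  (s' - s) * ((u - w1) * (u - w2)) by rewrite /cross /=; ring.
by rewrite normrM ler_wpM2r // between2_dist_le.
Qed.

(* B_(i+1) and B_(i+2) lie on the diagonal A_(i+1) A_(i+3), so both triangles of
   [shoelace_sub] lie in the ear A_(i+1) A_(i+2) A_(i+3). *)
Lemma shoelace_sub_K1_le n x (P := parabola_poly x) :
  (4 <= n)%N -> convex_ngon n P ->
  shoelace n (vtx n P) - shoelace n (vtx n (K1 n P)) <=
  \sum_(i < n) 2 * `|cross (vtx n P i.+1) (vtx n P i.+2) (vtx n P i.+3)|.
Proof.
move=> n_ge4 convex.
rewrite shoelace_sub; try exact: vtx_addn.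
apply: ler_sum => i _; rewrite !vtx_K1; try lia.
have [s [Bpt_ac _ s_between _]] := Bpt_parabola i.+1 n_ge4 convex.
have [s' [_ Bpt_bd _ s'_between]] := Bpt_parabola i n_ge4 convex.
rewrite Bpt_ac Bpt_bd /vtx /P /parabola_poly.
have := cross_chord_le_ear (x (i.+2 %% n)%N) s_between.
have := cross_chord2_le_ear (x (i.+2 %% n)%N) s_between s'_between.
set t1 := cross _ _ (chord _ _ s); set t2 := cross (chord _ _ s) _ _.
have := ler_norm t1; have := ler_norm t2; lra.
Qed.

Lemma chord_near_diagonal p q s dl : `|p ^+ 2 - p| <= dl -> `|q ^+ 2 - q| <= dl ->
  between s p q -> `|(chord p q s).2 - (chord p q s).1| <= dl.
Proof.
move=> p_near q_near s_between; apply: between_norm_le p_near q_near.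
rewrite /between /=.
have -> : ((p + q) * s - p * q - s - (p ^+ 2 - p)) * ((p + q) * s - p * q - s - (q ^+ 2 - q))
  = (p + q - 1) ^+ 2 * ((s - p) * (s - q)) by ring.
by rewrite mulr_ge0_le0 ?sqr_ge0.
Qed.

Lemma wedge_near_diagonal p q dl : `|p.1| <= 2 -> `|q.1| <= 2 ->
  `|p.2 - p.1| <= dl -> `|q.2 - q.1| <= dl -> `|wedge p q| <= 4 * dl.
Proof.
move=> p1_le q1_le p_near q_near.
have -> : wedge p q = p.1 * (q.2 - q.1) - q.1 * (p.2 - p.1) by rewrite /wedge; ring.
apply: le_trans (ler_normB _ _) _; rewrite !normrM.
have := ler_pM (normr_ge0 _) (normr_ge0 _) p1_le q_near.
have := ler_pM (normr_ge0 _) (normr_ge0 _) q1_le p_near.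
lra.
Qed.

Lemma Bpt_near_diagonal n x dl m (P := parabola_poly x) :
  (4 <= n)%N -> convex_ngon n P -> (forall j, (j < n)%N -> `|x j| <= 2) ->
  (forall j, (0 < j < n)%N -> `|x j ^+ 2 - x j| <= dl) ->
  `|(Bpt n P m.+1).1| <= 2 /\ `|(Bpt n P m.+1).2 - (Bpt n P m.+1).1| <= dl.
Proof.
move=> n_ge4 convex x_le2 x_near.
have res_lt k : (k %% n < n)%N by rewrite ltn_pmod //; lia.
have res_neq d1 d2 : (d1 < 4)%N -> (d2 < 4)%N -> d1 != d2 ->
    ((m + d1) %% n != (m + d2) %% n)%N.
  by move=> d1_lt d2_lt d1_neq; rewrite eqn_modDl !modn_small //; lia.
have near k : (0 < k %% n)%N -> `|x (k %% n)%N ^+ 2 - x (k %% n)%N| <= dl.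
  by move=> k_pos; apply: x_near; rewrite k_pos res_lt.
have [s [Bpt_ac Bpt_bd s_ac s_bd]] := Bpt_parabola m n_ge4 convex.
split; first by rewrite Bpt_ac; exact: between_norm_le s_ac (x_le2 _ _) (x_le2 _ _).
(* A_0 lies on at most one of the two diagonals through B_(m+1). *)
have [ac_pos|] := boolP ((0 < m %% n) && (0 < m.+2 %% n))%N.
  by case/andP: ac_pos => a_pos c_pos; rewrite Bpt_ac chord_near_diagonal ?near.
rewrite negb_and -!leqNgt !leqn0 => ac_zero.
have [b_pos d_pos] : (0 < m.+1 %% n)%N /\ (0 < m.+3 %% n)%N.
  rewrite !lt0n -addn3 -addn1; move: ac_zero; rewrite -addn2 -[X in (X %% n == 0)%N]addn0.
  by case/orP => /eqP z; split; rewrite -[X in _ != X]z; apply: res_neq.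
by rewrite Bpt_bd chord_near_diagonal ?near.
Qed.

Lemma shoelace_K1_near_diagonal n x dl (P := parabola_poly x) :
  (4 <= n)%N -> convex_ngon n P -> (forall j, (j < n)%N -> `|x j| <= 2) ->
  (forall j, (0 < j < n)%N -> `|x j ^+ 2 - x j| <= dl) ->
  `|shoelace n (vtx n (K1 n P))| <= 4 * dl * n%:R.
Proof.
move=> n_ge4 convex x_le2 x_near.
set B := vtx n (K1 n P).
rewrite /shoelace -(@sum_periodic_shift n 1 (fun i => wedge (B i) (B i.+1))); last first.
  by move=> i; rewrite /B -addSn !vtx_addn.
have -> : 4 * dl * n%:R = \sum_(i < n) 4 * dl by rewrite sumr_const card_ord mulr_natr.
apply: le_trans (ler_norm_sum _ _ _) (ler_sum _ _) => i _.
rewrite /B addn1 !vtx_K1; try lia.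
have [B1_le2 B1_near] := Bpt_near_diagonal i n_ge4 convex x_le2 x_near.
have [B2_le2 B2_near] := Bpt_near_diagonal i.+1 n_ge4 convex x_le2 x_near.
exact: wedge_near_diagonal.
Qed.

Lemma shoelace_parabola_ge n x M :
  (forall i, (i.+1 < n)%N -> 0 <= x i.+1 - x i <= M) ->
  (x n.-1 - x 0%N) ^+ 3 - M ^+ 2 * (x n.-1 - x 0%N) <=
  3 * shoelace n (vtx n (parabola_poly x)).
Proof.
move=> gap_le.
(* The cubes b^3 - a^3 telescope away; the cube of the closing gap x_0 - x_(n-1) is the
   main term. *)
have three_wedge a b : 3 * wedge (parabola_pt a) (parabola_pt b) =
    (b ^+ 3 - a ^+ 3) - (b - a) ^+ 3 by rewrite /wedge /=; ring.
rewrite /shoelace mulr_sumr /vtx /parabola_poly.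
under eq_bigr do rewrite three_wedge.
rewrite sumrB -(big_mkord xpredT (fun i => x (i.+1 %% n)%N ^+ 3 - x (i %% n)%N ^+ 3)).
rewrite telescope_sumr // modnn mod0n subrr sub0r.
case: n gap_le => [|m] gap_le; first by rewrite big_ord0 subrr expr0n mulr0 subr0 oppr0.
rewrite big_ord_recr /= modnn (modn_small (ltnSn m)).
have -> : \sum_(i < m) (x (i.+1 %% m.+1)%N - x (i %% m.+1)%N) ^+ 3 =
    \sum_(i < m) (x i.+1 - x i) ^+ 3.
  by apply: eq_bigr => i _; have i_lt := ltn_ord i; rewrite !modn_small //; lia.
have cube_le (i : 'I_m) : (x i.+1 - x i) ^+ 3 <= M ^+ 2 * (x i.+1 - x i).
  have /andP[gap_ge0 gap_leM] := gap_le i (ltn_ord i).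
  set g := x i.+1 - x i in gap_ge0 gap_leM *.
  rewrite -subr_ge0 (_ : M ^+ 2 * g - g ^+ 3 = g * ((M - g) * (M + g))); last by ring.
  by rewrite !mulr_ge0 //; lra.
have : \sum_(i < m) (x i.+1 - x i) ^+ 3 <= \sum_(i < m) M ^+ 2 * (x i.+1 - x i).
  by apply: ler_sum => i _; exact: cube_le.
rewrite -mulr_sumr -(big_mkord xpredT (fun i => x i.+1 - x i)) telescope_sumr //.
have : (x 0%N - x m) ^+ 3 = - (x m - x 0%N) ^+ 3 by ring.
lra.
Qed.

Definition clustered (p q : nat) (t : R) (j : nat) : R :=
  j%:R * t + (if (j < p)%N then -1 else if (j < q)%N then 0 else 1).

Section Clustered.
Variables (p q : nat) (t : R).
Let x := clustered p q t.

Lemma clustered_lt i j : 0 < t -> (p <= q)%N -> (i < j)%N -> x i < x j.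
Proof.
move=> t_gt0 p_le_q i_lt_j.
have : i%:R * t < j%:R * t by rewrite ltr_pM2r // ltr_nat.
rewrite /x /clustered; do !case: ifP; lia || lra.
Qed.

Lemma clustered_gap j : j.+1 != p -> j.+1 != q -> x j.+1 - x j = t.
Proof.
move=> Sj_neq_p Sj_neq_q; have : j.+1%:R * t = j%:R * t + t by rewrite -addn1 natrD mulrDl mul1r.
rewrite /x /clustered; do !case: ifP; lia || lra.
Qed.

Lemma clustered_gap_le j : 0 <= t -> (p < q)%N -> 0 <= x j.+1 - x j <= 1 + t.
Proof.
move=> t_ge0 p_lt_q; have : j.+1%:R * t = j%:R * t + t by rewrite -addn1 natrD mulrDl mul1r.
by rewrite /x /clustered; do !case: ifP; move=> *; apply/andP; split; lia || lra.
Qed.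

Lemma clustered_norm_le n j : 0 <= t -> n%:R * t <= 1 -> (j < n)%N -> `|x j| <= 2.
Proof.
move=> t_ge0 nt_le1 j_lt.
have : j%:R * t <= n%:R * t by rewrite ler_wpM2r // ler_nat ltnW.
have : 0 <= j%:R * t by rewrite mulr_ge0.
by rewrite /x /clustered; do !case: ifP; move=> *; apply/ler_normlP; split; lra.
Qed.

Lemma clustered_cyclic_gap n j : (j.+1 %% n != 0)%N -> (j.+1 %% n != p)%N ->
  (j.+1 %% n != q)%N -> x (j.+1 %% n)%N - x (j %% n)%N = t.
Proof. by rewrite modnS; case: ifP => // _ _; exact: clustered_gap. Qed.

Lemma clustered_span n : (0 < p < q)%N -> (q < n)%N -> x n.-1 - x 0%N = 2 + n.-1%:R * t.
Proof.
move=> /andP[p_gt0 p_lt_q] q_lt_n.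
by rewrite /x /clustered p_gt0 !ifN -?leqNgt; try lia; ring.
Qed.

Lemma shoelace_clustered_ge1 n : 0 < t -> n%:R * t <= 1 -> (0 < p < q)%N -> (q < n)%N ->
  1 <= shoelace n (vtx n (parabola_poly x)).
Proof.
move=> t_gt0 nt_le1 pq q_lt_n; have /andP[_ p_lt_q] := pq.
have := shoelace_parabola_ge (n := n) (fun i _ => clustered_gap_le i (ltW t_gt0) p_lt_q).
rewrite clustered_span //.
have t_le : t <= 1 / 2.
  have : 2%:R * t <= n%:R * t by rewrite ler_wpM2r ?ler_nat ?ltW //; lia.
  lra.
have : 0 <= n.-1%:R * t by rewrite mulr_ge0 // ltW.
set L := 2 + _ => nt_ge0; have L_ge2 : 2 <= L by rewrite /L; lra.
suff : 3 <= L * ((L - (1 + t)) * (L + (1 + t))).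
  by rewrite (_ : L * _ = L ^+ 3 - (1 + t) ^+ 2 * L); [lra | ring].
have diff_sq_ge : 1 / 2 * 3 <= (L - (1 + t)) * (L + (1 + t)) by apply: ler_pM; lra.
have : 2 * (1 / 2 * 3) <= L * ((L - (1 + t)) * (L + (1 + t))) by apply: ler_pM; lra.
lra.
Qed.
End Clustered.

Lemma convex_clustered n p q t : (3 <= n)%N -> (p <= q)%N -> 0 < t ->
  convex_ngon n (parabola_poly (clustered p q t)).
Proof.
move=> n_ge3 p_le_q t_gt0.
by apply: convex_parabola => // i j /andP[i_lt_j _]; exact: clustered_lt.
Qed.

Lemma clustered12_near_diagonal n t j : 0 <= t -> n%:R * t <= 1 -> (0 < j < n)%N ->
  `|clustered 1 2 t j ^+ 2 - clustered 1 2 t j| <= 2 * (n%:R * t).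
Proof.
move=> t_ge0 nt_le1 /andP[j_gt0 j_lt].
have : j%:R * t <= n%:R * t by rewrite ler_wpM2r // ler_nat ltnW.
have : 0 <= j%:R * t by rewrite mulr_ge0.
rewrite /clustered ltnNge j_gt0 /=; case: ifP => [j_lt2|_] jt_ge0 jt_le.
  move: jt_ge0 jt_le; have -> : j = 1%N by lia.
  by rewrite mul1r addr0 => _ t_le; apply/ler_normlP; split; nra.
apply/ler_normlP; split; nra.
Qed.

Lemma norm_gap_product_le (a b c t : R) : `|a| <= 2 -> `|b| <= 2 -> `|c| <= 2 -> 0 <= t ->
  b - a = t \/ c - b = t -> `|(b - a) * (c - a) * (c - b)| <= 16 * t.
Proof.
move=> /ler_normlP[a_ge a_le] /ler_normlP[b_ge b_le] /ler_normlP[c_ge c_le] t_ge0.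
have dist_le (u v : R) : -2 <= u <= 2 -> -2 <= v <= 2 -> `|u - v| <= 4.
  by move=> /andP[? ?] /andP[? ?]; apply/ler_normlP; split; lra.
have ba_le := dist_le b a; have ca_le := dist_le c a; have cb_le := dist_le c b.
rewrite !normrM => -[->|->]; rewrite (ger0_norm t_ge0).
  have : `|c - a| * `|c - b| <= 4 * 4 by apply: ler_pM => //; [apply: ca_le | apply: cb_le]; lra.
  by move=> h; nra.
have : `|b - a| * `|c - a| <= 4 * 4 by apply: ler_pM => //; [apply: ba_le | apply: ca_le]; lra.
by move=> h; nra.
Qed.

Lemma clustered24_ear_le n t i (P := parabola_poly (clustered 2 4 t)) :
  (6 <= n)%N -> 0 <= t -> n%:R * t <= 1 ->
  `|cross (vtx n P i.+1) (vtx n P i.+2) (vtx n P i.+3)| <= 16 * t.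
Proof.
move=> n_ge6 t_ge0 nt_le1; set x := clustered 2 4 t.
have x_le2 j : `|x (j %% n)%N| <= 2.
  by apply: clustered_norm_le nt_le1 _ => //; rewrite ltn_pmod //; lia.
rewrite /vtx /P /parabola_poly cross_parabola; apply: norm_gap_product_le => //.
set r := (i.+2 %% n)%N.
have [r_cluster|r_inside] := boolP [|| r == 0, r == 2 | r == 4]%N.
  right; have Sr_eq : (i.+3 %% n = r.+1)%N.
    by rewrite /r -addn1 -modnDml modn_small addn1 //; lia.
  by apply: clustered_cyclic_gap; rewrite -/r Sr_eq; lia.
by left; apply: clustered_cyclic_gap; rewrite -/r; lia.
Qed.

Lemma K1_area_ratio_le n t (P := parabola_poly (clustered 1 2 t)) :
  (4 <= n)%N -> 0 < t -> n%:R * t <= 1 -> area n (K1 n P) / area n P <= 8 * n%:R ^+ 2 * t.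
Proof.
move=> n_ge4 t_gt0 nt_le1.
have convex : convex_ngon n P by apply: convex_clustered; lia.
have SA_ge1 := shoelace_clustered_ge1 (p := 1) (q := 2) (n := n) t_gt0 nt_le1 isT ltac:(lia).
have := shoelace_K1_near_diagonal n_ge4 convex
  (fun j => clustered_norm_le 1 2 (ltW t_gt0) nt_le1)
  (fun j => clustered12_near_diagonal (ltW t_gt0) nt_le1).
rewrite area_ratio (ger0_norm (le_trans ler01 SA_ge1)) ler_pdivrMr; last lra.
move/le_trans; apply.
rewrite (_ : 4 * _ * _ = 8 * n%:R ^+ 2 * t); last by ring.
by rewrite ler_peMr // !mulr_ge0 // ltW.
Qed.

Lemma K1_area_ratio_ge n t (P := parabola_poly (clustered 2 4 t)) :
  (6 <= n)%N -> 0 < t -> n%:R * t <= 1 -> 1 - 32 * n%:R * t <= area n (K1 n P) / area n P.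
Proof.
move=> n_ge6 t_gt0 nt_le1.
have convex : convex_ngon n P by apply: convex_clustered; lia.
have SA_ge1 : 1 <= shoelace n (vtx n P).
  exact: (shoelace_clustered_ge1 (p := 2) (q := 4) (n := n) t_gt0 nt_le1 isT ltac:(lia)).
have ears_le : \sum_(i < n) 2 * `|cross (vtx n P i.+1) (vtx n P i.+2) (vtx n P i.+3)|
    <= 32 * n%:R * t.
  have -> : 32 * n%:R * t = \sum_(i < n) 2 * (16 * t).
    by rewrite sumr_const card_ord -mulr_natr; ring.
  apply: ler_sum => i _; rewrite ler_pM2l //.
  exact: clustered24_ear_le (ltW t_gt0) nt_le1.
have SA_SB_le : shoelace n (vtx n P) - shoelace n (vtx n (K1 n P)) <= 32 * n%:R * t.
  exact: le_trans (shoelace_sub_K1_le (ltnW (ltnW n_ge6)) convex) ears_le.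
rewrite area_ratio (ger0_norm (le_trans ler01 SA_ge1)) ler_pdivlMr; last lra.
have : 32 * n%:R * t <= 32 * n%:R * t * shoelace n (vtx n P).
  by rewrite ler_peMr // !mulr_ge0 // ltW.
have := ler_norm (shoelace n (vtx n (K1 n P))).
lra.
Qed.

Lemma small_step_exists n (eps : R) : (0 < n)%N -> 0 < eps ->
  exists t : R, [/\ 0 < t, n%:R * t <= 1, 8 * n%:R ^+ 2 * t < eps & 32 * n%:R * t < eps].
Proof.
move=> n_gt0 eps_gt0; have n_ge1 : 1 <= n%:R :> R by rewrite ler1n.
set t := eps / (32 * n%:R ^+ 2 * (1 + eps)).
have t_gt0 : 0 < t by rewrite /t !divr_gt0 ?mulr_gt0 ?exprn_gt0; lra.
have t_eq : 32 * n%:R ^+ 2 * t = eps / (1 + eps).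
  by rewrite /t; field; rewrite pnatr_eq0 -lt0n n_gt0 andbT lt0r_neq0 //; lra.
have frac_lt1 : eps / (1 + eps) < 1 by rewrite ltr_pdivrMr; lra.
have frac_lt : eps / (1 + eps) < eps by rewrite ltr_pdivrMr; nra.
have nt_le : n%:R * t <= n%:R ^+ 2 * t.
  by apply: ler_wpM2r; [exact: ltW | rewrite expr2 ler_peMr ?ler0n].
have : 0 <= n%:R * t by rewrite mulr_ge0 // ltW.
by exists t; split => //; lra.
Qed.

End ShortDiagonals.

Unset Implicit Arguments.

Theorem theorem1p1 (R : realType) :
  (forall n : nat, (5 <= n)%N -> forall eps : R, 0 < eps ->
     exists P : nat -> point R,
       convex_ngon n P /\ area n (K1 n P) / area n P < eps) /\
  (forall n : nat, (6 <= n)%N -> forall eps : R, 0 < eps ->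
     exists P : nat -> point R,
       convex_ngon n P /\ area n (K1 n P) / area n P > 1 - eps).
Proof.
split=> n n_ge eps eps_gt0;
  have [t [t_gt0 nt_le1 small_A small_B]] := small_step_exists (n := n) ltac:(lia) eps_gt0.
- exists (parabola_poly (clustered 1 2 t)); split; first by apply: convex_clustered; lia.
  by apply: le_lt_trans small_A; apply: K1_area_ratio_le => //; lia.
- exists (parabola_poly (clustered 2 4 t)); split; first by apply: convex_clustered; lia.
  have := K1_area_ratio_ge n_ge t_gt0 nt_le1; lra.
Qed.
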